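(* Let $A,B\subset\mathbb N$ be such that $A\cup B$ is a set of pointwise recurrence for minimal distal systems. Then at least one of $A$, $B$ is a set of pointwise recurrence for minimal distal systems.
   Context: A system is a compact metric space with a homeomorphism $T$; minimal: no proper nonempty closed invariant subset; distal: $\inf_{n\in\mathbb Z}d(T^nx,T^nx')>0$ for $x\ne x'$. $R\subset\mathbb N$ is a set of pointwise recurrence for minimal distal systems if for every minimal distal system $(X,T)$ and every $x\in X$, $\inf_{n\in R}d(T^nx,x)=0$. *)

From Stdlib Require Import Reals List ZArith.
Open Scope R_scope.

Definition is_metric {X : Type} (d : X -> X -> R) : Prop :=
  (forall x y, 0 <= d x y) /\
  (forall x y, d x y = 0 <-> x = y) /\
  (forall x y, d x y = d y x) /\
  (forall x y z, d x z <= d x y + d y z).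

Definition is_open {X : Type} (d : X -> X -> R) (U : X -> Prop) : Prop :=
  forall x, U x -> exists eps, 0 < eps /\ forall y, d x y < eps -> U y.

Definition is_closed {X : Type} (d : X -> X -> R) (F : X -> Prop) : Prop :=
  is_open d (fun x => ~ F x).

Definition is_compact {X : Type} (d : X -> X -> R) : Prop :=
  forall (I : Type) (U : I -> X -> Prop),
    (forall i, is_open d (U i)) ->
    (forall x, exists i, U i x) ->
    exists l : list I, forall x, exists i, In i l /\ U i x.

Definition continuous {X : Type} (d : X -> X -> R) (f : X -> X) : Prop :=
  forall x eps, 0 < eps -> exists delta, 0 < delta /\
    forall y, d x y < delta -> d (f x) (f y) < eps.

Definition is_system {X : Type} (d : X -> X -> R) (T Tinv : X -> X) : Prop :=
  is_metric d /\ is_compact d /\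
  (forall x, T (Tinv x) = x) /\ (forall x, Tinv (T x) = x) /\
  continuous d T /\ continuous d Tinv.

Fixpoint iter {X : Type} (n : nat) (f : X -> X) (x : X) : X :=
  match n with O => x | S m => f (iter m f x) end.

Definition zpow {X : Type} (T Tinv : X -> X) (n : Z) : X -> X :=
  match n with
  | Z0 => fun x => x
  | Zpos p => iter (Pos.to_nat p) T
  | Zneg p => iter (Pos.to_nat p) Tinv
  end.

Definition is_minimal {X : Type} (d : X -> X -> R) (T : X -> X) : Prop :=
  forall Y : X -> Prop,
    is_closed d Y -> (exists y, Y y) -> (forall x, Y x <-> Y (T x)) ->
    forall x, Y x.

Definition is_distal {X : Type} (d : X -> X -> R) (T Tinv : X -> X) : Prop :=
  forall x x', x <> x' -> exists c, 0 < c /\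
    forall n : Z, c <= d (zpow T Tinv n x) (zpow T Tinv n x').

Definition pw_recurrence_minimal_distal (Rs : nat -> Prop) : Prop :=
  forall (X : Type) (d : X -> X -> R) (T Tinv : X -> X),
    is_system d T Tinv -> is_minimal d T -> is_distal d T Tinv ->
    forall x : X, forall eps, 0 < eps ->
      exists n, Rs n /\ d (iter n T x) x < eps.

(* If neither A nor B is a set of recurrence, pick minimal distal systems (X1, x1) and
   (X2, x2) and a radius eps witnessing this. The product of two distal systems is distal,
   and in a distal system every orbit closure is minimal: for an idempotent ultrafilter
   p = p + p on Z, the p-limits y of T^n w satisfy p-lim T^n y = y, so w and y are
   proximal, hence equal. Applying the hypothesis on A ∪ B to the orbit closure of
   (x1, x2) yields n in A ∪ B returning both coordinates within eps: a contradiction. *)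

From Pilot Require Import Defs.
From Stdlib Require Import Reals List ZArith Classical Lra Lia.
From Stdlib Require Import FunctionalExtensionality PropExtensionality ProofIrrelevance.
From mathcomp Require classical_sets boolp filter.
Open Scope R_scope.

Record is_filter {T : Type} (F : (T -> Prop) -> Prop) : Prop := {
  filter_true : F (fun _ => True);
  filter_and : forall A B, F A -> F B -> F (fun x => A x /\ B x);
  filter_mono : forall A B : T -> Prop, (forall x, A x -> B x) -> F A -> F B;
  filter_proper : ~ F (fun _ => False) }.

Record is_ultra {T : Type} (F : (T -> Prop) -> Prop) : Prop := {
  ultra_filter :> is_filter F;
  ultra_dec : forall A, F A \/ F (fun x => ~ A x) }.

Arguments filter_true {T F}.
Arguments filter_and {T F} _ {A B}.
Arguments filter_mono {T F} _ {A B}.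
Arguments filter_proper {T F}.
Arguments ultra_dec {T F}.

Section Filters.
Context {T : Type}.

Implicit Types F G : (T -> Prop) -> Prop.

Lemma filter_ex {F A} : is_filter F -> F A -> exists x, A x.
Proof.
  intros HF HA. apply NNPP; intro Hn. apply (filter_proper HF).
  apply (filter_mono HF (A := A)); auto. intros x Hx; apply Hn; exists x; exact Hx.
Qed.

Lemma filter_and_ex {F A B} : is_filter F -> F A -> F B -> exists x, A x /\ B x.
Proof. intros HF HA HB. apply (filter_ex HF). apply (filter_and HF); auto. Qed.

Lemma filter_compl_not {F A} : is_filter F -> F (fun x => ~ A x) -> ~ F A.
Proof. intros HF Hn HA. destruct (filter_and_ex HF HA Hn) as [x [h1 h2]]; tauto. Qed.

Lemma ultra_compl {F A} : is_ultra F -> ~ F A -> F (fun x => ~ A x).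
Proof. intros HU Hn. destruct (ultra_dec HU A); tauto. Qed.

Lemma ultra_sub_eq {F G} :
  is_ultra F -> is_filter G -> (forall A, F A -> G A) -> F = G.
Proof.
  intros HF HG HFG. apply functional_extensionality; intro A.
  apply propositional_extensionality; split; auto.
  intro HGA. apply NNPP; intro Hn.
  exact (filter_compl_not HG (HFG _ (ultra_compl HF Hn)) HGA).
Qed.

Lemma ultra_extend F : is_filter F -> exists U, is_ultra U /\ forall A, F A -> U A.
Proof.
  intros HF.
  assert (PF : filter.ProperFilter F).
  { apply filter.Build_ProperFilter_ex.
    - intros A HA; exact (filter_ex HF HA).
    - constructor.
      + exact (filter_true HF).
      + intros A B; exact (filter_and HF).
      + intros A B HAB; exact (filter_mono HF HAB). }
  destruct (filter.ultraFilterLemma PF) as [U [HU HFU]].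
  pose proof HU as [[U0 FU] _].
  exists U. split; [|exact HFU]. split.
  - split.
    + exact (@filter.filterT _ U FU).
    + exact (@filter.filterI _ U FU).
    + exact (@filter.filterS _ U FU).
    + exact U0.
  - intros A; exact (filter.in_ultra_setVsetC A HU).
Qed.

End Filters.

Definition filter_map {A B : Type} (f : A -> B) (U : (A -> Prop) -> Prop) :
  (B -> Prop) -> Prop := fun S => U (fun a => S (f a)).

Lemma ultra_map {A B : Type} (f : A -> B) U : is_ultra U -> is_ultra (filter_map f U).
Proof.
  intros HU. split; [split|].
  - exact (filter_true HU).
  - intros P Q; exact (filter_and HU).
  - intros P Q HPQ; apply (filter_mono HU); auto.
  - exact (filter_proper HU).
  - intros P; exact (ultra_dec HU (fun a => P (f a))).
Qed.

Lemma zorn_premaximal (T : Type) (P : T -> Prop) (R : T -> T -> Prop) (t0 : T) :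
  P t0 -> (forall t, R t t) -> (forall r s t, R r s -> R s t -> R r t) ->
  (forall C : T -> Prop, (forall t, C t -> P t) ->
     (forall s t, C s -> C t -> R s t \/ R t s) -> (exists a, C a) ->
     exists t, P t /\ forall s, C s -> R s t) ->
  exists t, P t /\ forall s, P s -> R t s -> R s t.
Proof.
  intros P0 Hrefl Htrans Hchain.
  set (S := {t | P t}).
  destruct (@classical_sets.ZL_preorder S (exist _ t0 P0)
              (fun a b => boolp.asbool (R (proj1_sig a) (proj1_sig b)))) as [[t Pt] Hmax].
  - intros t; apply boolp.asboolT, Hrefl.
  - intros r s u H1 H2; apply boolp.asboolT.
    exact (Htrans _ _ _ (boolp.asboolW H1) (boolp.asboolW H2)).
  - intros C HC. destruct (classic (exists a, C a)) as [[a Ca]|Hn].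
    + destruct (Hchain (fun t => exists Pt, C (exist _ t Pt))) as [t [Pt Ht]].
      * intros t [Pt _]; exact Pt.
      * intros s t [Ps Cs] [Pt Ct].
        destruct (HC _ _ Cs Ct) as [H|H]; [left|right]; exact (boolp.asboolW H).
      * exists (proj1_sig a). exists (proj2_sig a). destruct a; exact Ca.
      * exists (exist _ t Pt). intros [s Ps] Cs. apply boolp.asboolT, Ht. exists Ps; exact Cs.
    + exists (exist _ t0 P0). intros s Cs. exfalso; apply Hn; exists s; exact Cs.
  - exists t. split; [exact Pt|]. intros s Ps Hts.
    exact (boolp.asboolW (Hmax (exist _ s Ps) (boolp.asboolT Hts))).
Qed.

Definition ultraZ := (Z -> Prop) -> Prop.

Definition uadd (p q : ultraZ) : ultraZ := fun S => p (fun n => q (fun m => S (n + m)%Z)).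

Lemma uadd_ultra p q : is_ultra p -> is_ultra q -> is_ultra (uadd p q).
Proof.
  intros Hp Hq. unfold uadd. split; [split|].
  - apply (filter_mono Hp (A := fun _ => True)); [|exact (filter_true Hp)].
    intros n _; exact (filter_true Hq).
  - intros A B HA HB. refine (filter_mono Hp _ (filter_and Hp HA HB)).
    intros n [h1 h2]; exact (filter_and Hq h1 h2).
  - intros A B HAB HA. refine (filter_mono Hp _ HA).
    intros n h; refine (filter_mono Hq _ h); auto.
  - intro H. apply (filter_proper Hp); refine (filter_mono Hp _ H).
    intros n h; exact (filter_proper Hq h).
  - intros A. destruct (ultra_dec Hp (fun n => q (fun m => A (n + m)%Z))) as [h|h];
      [left; exact h|right].
    refine (filter_mono Hp _ h). intros n hn; exact (ultra_compl Hq hn).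
Qed.

Lemma uaddA p q r : uadd (uadd p q) r = uadd p (uadd q r).
Proof.
  apply functional_extensionality; intro S. unfold uadd.
  f_equal; apply functional_extensionality; intro a.
  f_equal; apply functional_extensionality; intro b.
  f_equal; apply functional_extensionality; intro c.
  rewrite Z.add_assoc; reflexivity.
Qed.

(* Ultrafilters on Z are the points of βZ, whose topology has the clopen base {q | q S}. *)
Definition uclosed (C : ultraZ -> Prop) : Prop :=
  forall p, is_ultra p -> ~ C p -> exists S, p S /\ forall q, is_ultra q -> C q -> ~ q S.

Lemma uclosed_mem A : uclosed (fun q => q A).
Proof.
  intros p Hp Hn. exists (fun n => ~ A n). split.
  - exact (ultra_compl Hp Hn).
  - intros q Hq HqA h. exact (filter_compl_not Hq h HqA).
Qed.

Lemma uclosed_and C D : uclosed C -> uclosed D -> uclosed (fun q => C q /\ D q).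
Proof.
  intros HC HD p Hp Hn. destruct (classic (C p)) as [Cp|nCp].
  - assert (nDp : ~ D p) by tauto. destruct (HD p Hp nDp) as [S [HS k]].
    exists S. split; [exact HS|]. intros q Hq [_ Dq]; exact (k q Hq Dq).
  - destruct (HC p Hp nCp) as [S [HS k]].
    exists S. split; [exact HS|]. intros q Hq [Cq _]; exact (k q Hq Cq).
Qed.

Lemma uclosed_bigcap (Cs : (ultraZ -> Prop) -> Prop) :
  (forall C, Cs C -> uclosed C) -> uclosed (fun q => forall C, Cs C -> C q).
Proof.
  intros HCs p Hp Hn. apply not_all_ex_not in Hn as [C HC].
  apply imply_to_and in HC as [CsC nCp].
  destruct (HCs C CsC p Hp nCp) as [S [HS k]].
  exists S. split; [exact HS|]. intros q Hq Iq; exact (k q Hq (Iq C CsC)).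
Qed.

(* Compactness of βZ. *)
Lemma uclosed_directed (Cs : (ultraZ -> Prop) -> Prop) :
  (forall C, Cs C -> uclosed C) ->
  (forall C, Cs C -> exists q, is_ultra q /\ C q) ->
  (exists C, Cs C) ->
  (forall C D, Cs C -> Cs D -> exists E, Cs E /\ forall q, E q -> C q /\ D q) ->
  exists p, is_ultra p /\ forall C, Cs C -> C p.
Proof.
  intros Hcl Hne [C0 HC0] Hdir.
  set (G := fun S : Z -> Prop =>
              exists C, Cs C /\ forall q, is_ultra q -> C q -> q S).
  assert (HG : is_filter G).
  { split.
    - exists C0. split; [exact HC0|]. intros q Hq _; exact (filter_true Hq).
    - intros A B [C [HC kC]] [D [HD kD]]. destruct (Hdir C D HC HD) as [E [HE kE]].
      exists E. split; [exact HE|]. intros q Hq Eq.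
      destruct (kE q Eq) as [Cq Dq]. exact (filter_and Hq (kC q Hq Cq) (kD q Hq Dq)).
    - intros A B HAB [C [HC kC]]. exists C. split; [exact HC|].
      intros q Hq Cq; exact (filter_mono Hq HAB (kC q Hq Cq)).
    - intros [C [HC kC]]. destruct (Hne C HC) as [q [Hq Cq]].
      exact (filter_proper Hq (kC q Hq Cq)). }
  destruct (ultra_extend G HG) as [p [Hp HGp]].
  exists p. split; [exact Hp|]. intros C HC. apply NNPP; intro nCp.
  destruct (Hcl C HC p Hp nCp) as [S [HS kS]].
  apply (filter_compl_not Hp (A := S)); [|exact HS].
  apply HGp. exists C. split; [exact HC|].
  intros q Hq Cq. exact (ultra_compl Hq (kS q Hq Cq)).
Qed.
Record usemigroup (K : ultraZ -> Prop) : Prop := {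
  usg_closed : uclosed K;
  usg_nonempty : exists q, K q;
  usg_ultra : forall q, K q -> is_ultra q;
  usg_add : forall p q, K p -> K q -> K (uadd p q) }.

Lemma usemigroup_minimal K0 : usemigroup K0 ->
  exists K, usemigroup K /\ (forall q, K q -> K0 q) /\
    forall K', usemigroup K' -> (forall q, K' q -> K q) -> forall q, K q -> K' q.
Proof.
  intros H0.
  destruct (zorn_premaximal _ (fun K => usemigroup K /\ forall q, K q -> K0 q)
              (fun K1 K2 => forall q, K2 q -> K1 q) K0) as [K [[HK HKK0] Hmin]].
  - split; auto.
  - auto.
  - auto.
  - intros C HC Htot [K1 CK1]. exists (fun q => forall K, C K -> K q). split; [split; [split|]|].
    + apply uclosed_bigcap. intros K CK; exact (usg_closed _ (proj1 (HC K CK))).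
    + destruct (uclosed_directed C) as [p [_ Hp]].
      * intros K CK; exact (usg_closed _ (proj1 (HC K CK))).
      * intros K CK. destruct (usg_nonempty _ (proj1 (HC K CK))) as [q Kq].
        exists q. split; [exact (usg_ultra _ (proj1 (HC K CK)) q Kq)|exact Kq].
      * exists K1; exact CK1.
      * intros K K' CK CK'. destruct (Htot K K' CK CK') as [H|H];
          [exists K'|exists K]; split; auto.
      * exists p; exact Hp.
    + intros q Iq. exact (usg_ultra _ (proj1 (HC K1 CK1)) q (Iq K1 CK1)).
    + intros p q Ip Iq K CK. exact (usg_add _ (proj1 (HC K CK)) p q (Ip K CK) (Iq K CK)).
    + intros q Iq. exact (proj2 (HC K1 CK1) q (Iq K1 CK1)).
    + intros K CK q Iq. exact (Iq K CK).
  - exists K. split; [exact HK|split; [exact HKK0|]].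
    intros K' HK' HK'K. apply Hmin; [|exact HK'K]. split; auto.
Qed.

Lemma uclosed_uadd_image K x :
  uclosed K -> (forall y, K y -> is_ultra y) -> is_ultra x ->
  uclosed (fun q => exists y, K y /\ q = uadd y x).
Proof.
  intros HK HKu Hx p Hp Hn.
  destruct (classic (exists A, p A /\ ~ exists y, K y /\ uadd y x A)) as [[A [HA nA]]|Hall].
  { exists A. split; [exact HA|]. intros q _ [y [Ky ->]] hq. apply nA. exists y; auto. }
  exfalso. apply Hn.
  destruct (uclosed_directed (fun D => exists A, p A /\ D = fun y => K y /\ uadd y x A))
    as [y [Hy HyD]].
  - intros D [A [_ ->]]. apply uclosed_and; [exact HK|].
    exact (uclosed_mem (fun n => x (fun m => A (n + m)%Z))).
  - intros D [A [HA ->]]. apply NNPP; intro nD. apply Hall. exists A. split; [exact HA|].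
    intros [y [Ky HyA]]. apply nD. exists y. auto.
  - exists (fun y => K y /\ uadd y x (fun _ => True)).
    exists (fun _ => True). split; [exact (filter_true Hp)|reflexivity].
  - intros D E [A [HA ->]] [B [HB ->]].
    exists (fun y => K y /\ uadd y x (fun n => A n /\ B n)). split.
    + exists (fun n => A n /\ B n). split; [exact (filter_and Hp HA HB)|reflexivity].
    + intros q [Kq HqAB]. assert (Hqx := uadd_ultra q x (HKu q Kq) Hx).
      split; (split; [exact Kq|]); refine (filter_mono Hqx _ HqAB); tauto.
  - destruct (HyD (fun y => K y /\ uadd y x (fun _ => True))) as [Ky _].
    { exists (fun _ => True). split; [exact (filter_true Hp)|reflexivity]. }
    exists y. split; [exact Ky|]. apply ultra_sub_eq; [exact Hp|apply uadd_ultra; auto|].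
    intros A HA. exact (proj2 (HyD _ (ex_intro _ A (conj HA eq_refl)))).
Qed.

Lemma uclosed_uadd_fix x : is_ultra x -> uclosed (fun y => uadd y x = x).
Proof.
  intros Hx p Hp Hne.
  assert (Hex : exists A, uadd p x A /\ ~ x A).
  { apply NNPP; intro Hc. apply Hne, ultra_sub_eq; [apply uadd_ultra; auto|exact Hx|].
    intros A HA. apply NNPP; intro nA. apply Hc. exists A; auto. }
  destruct Hex as [A [HA nA]].
  exists (fun n => x (fun m => A (n + m)%Z)). split; [exact HA|].
  intros q _ Eq hq. apply nA. rewrite <- Eq. exact hq.
Qed.

(* Ellis-Numakura lemma: a minimal closed subsemigroup K is K + x for each of its points x,
   and the points y of K with y + x = x form a closed subsemigroup, hence all of K. *)
Lemma ellis_numakura K0 : usemigroup K0 -> exists p, K0 p /\ uadd p p = p.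
Proof.
  intros H0. destruct (usemigroup_minimal K0 H0) as [K [HK [HKK0 Hmin]]].
  destruct (usg_nonempty _ HK) as [x Kx].
  assert (Hx : is_ultra x) by exact (usg_ultra _ HK x Kx).
  assert (HKx : usemigroup (fun q => exists y, K y /\ q = uadd y x)).
  { split.
    - exact (uclosed_uadd_image K x (usg_closed _ HK) (usg_ultra _ HK) Hx).
    - exists (uadd x x), x; auto.
    - intros q [y [Ky ->]]. exact (uadd_ultra y x (usg_ultra _ HK y Ky) Hx).
    - intros a b [y1 [K1 ->]] [y2 [K2 ->]]. exists (uadd (uadd y1 x) y2). split.
      + apply (usg_add _ HK); [apply (usg_add _ HK)|]; auto.
      + rewrite (uaddA (uadd y1 x) y2 x). reflexivity. }
  assert (HKxK : forall q, (exists y, K y /\ q = uadd y x) -> K q).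
  { intros q [y [Ky ->]]. exact (usg_add _ HK y x Ky Kx). }
  destruct (Hmin _ HKx HKxK x Kx) as [y0 [Ky0 Hy0]].
  assert (HH : usemigroup (fun y => K y /\ uadd y x = x)).
  { split.
    - exact (uclosed_and _ _ (usg_closed _ HK) (uclosed_uadd_fix x Hx)).
    - exists y0. auto.
    - intros q [Kq _]; exact (usg_ultra _ HK q Kq).
    - intros a b [Ka Ea] [Kb Eb]. split; [exact (usg_add _ HK a b Ka Kb)|].
      rewrite uaddA, Eb, Ea. reflexivity. }
  exists x. split; [exact (HKK0 x Kx)|].
  exact (proj2 (Hmin _ HH (fun q => @proj1 _ _) x Kx)).
Qed.

Definition filter_lim {X : Type} (d : X -> X -> R) (U : (X -> Prop) -> Prop) x :=
  forall eps, 0 < eps -> U (fun y => d x y < eps).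

Section Metric.
Context {X : Type} {d : X -> X -> R} (Hm : is_metric d).

Lemma metric_ge0 x y : 0 <= d x y.
Proof. apply (proj1 Hm). Qed.
Lemma metric_refl x : d x x = 0.
Proof. apply (proj1 (proj2 Hm)). reflexivity. Qed.
Lemma metric_eq0 x y : d x y = 0 -> x = y.
Proof. apply (proj1 (proj2 Hm)). Qed.
Lemma metric_sym x y : d x y = d y x.
Proof. apply (proj1 (proj2 (proj2 Hm))). Qed.
Lemma metric_tri x y z : d x z <= d x y + d y z.
Proof. apply (proj2 (proj2 (proj2 Hm))). Qed.

Lemma ball_open x r : is_open d (fun y => d x y < r).
Proof.
  intros y Hy. exists (r - d x y). split; [lra|]. intros z Hz.
  pose proof (metric_tri x y z). lra.
Qed.

Lemma filter_lim_unique U x y : is_filter U -> filter_lim d U x -> filter_lim d U y -> x = y.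
Proof.
  intros HU Hx Hy. apply metric_eq0. apply NNPP; intro Hn.
  pose proof (metric_ge0 x y). set (e := d x y / 2).
  assert (He : 0 < e) by (unfold e; lra).
  destruct (filter_and_ex HU (Hx e He) (Hy e He)) as [z [h1 h2]].
  pose proof (metric_tri x z y). rewrite (metric_sym z y) in H0. unfold e in *. lra.
Qed.

Lemma closed_filter_lim Y U x : is_closed d Y -> is_filter U -> filter_lim d U x -> U Y -> Y x.
Proof.
  intros HY HU Hx HUY. apply NNPP; intro Hn. destruct (HY x Hn) as [e [he k]].
  destruct (filter_and_ex HU (Hx e he) HUY) as [y [h1 h2]]. exact (k y h1 h2).
Qed.

Lemma approx_ultra_lim {I : Type} (f : I -> X) y :
  (forall eps, 0 < eps -> exists i, d (f i) y < eps) ->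
  exists p, is_ultra p /\ filter_lim d (filter_map f p) y.
Proof.
  intros Hf.
  set (F0 := fun S : I -> Prop => exists e, 0 < e /\ forall i, d (f i) y < e -> S i).
  assert (HF : is_filter F0).
  { split.
    - exists 1. split; [lra|auto].
    - intros A B [e1 [h1 k1]] [e2 [h2 k2]]. exists (Rmin e1 e2).
      split; [apply Rmin_glb_lt; auto|].
      intros i Hi. pose proof (Rmin_l e1 e2). pose proof (Rmin_r e1 e2).
      split; [apply k1|apply k2]; lra.
    - intros A B HAB [e [h k]]. exists e. auto.
    - intros [e [h k]]. destruct (Hf e h) as [i Hi]. exact (k i Hi). }
  destruct (ultra_extend F0 HF) as [p [Hp Hp0]]. exists p. split; [exact Hp|].
  intros e He. apply Hp0. exists e. split; [exact He|].
  intros i Hi. rewrite metric_sym. exact Hi.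
Qed.

Lemma compact_ultra_lim : is_compact d -> forall U, is_ultra U -> exists x, filter_lim d U x.
Proof.
  intros Hc U HU. apply NNPP; intro Hn.
  set (V := fun (i : X * R) y =>
              0 < snd i /\ ~ U (fun z => d (fst i) z < snd i) /\ d (fst i) y < snd i).
  destruct (Hc (X * R)%type V) as [l Hl].
  - intros i y [h1 [h2 h3]]. destruct (ball_open (fst i) (snd i) y h3) as [e [he k]].
    exists e. split; auto. intros z Hz. unfold V. auto.
  - intros y. assert (Hy : ~ filter_lim d U y) by (intro h; apply Hn; exists y; auto).
    apply not_all_ex_not in Hy as [e He]. apply imply_to_and in He as [He1 He2].
    exists (y, e). unfold V; simpl. rewrite metric_refl. auto.
  - assert (Hall : forall l', U (fun y => forall i, In i l' -> ~ V i y)).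
    { intro l'. induction l' as [|i l' IH].
      - refine (filter_mono HU _ (filter_true HU)). intros y _ i [].
      - assert (Hi : U (fun y => ~ V i y)).
        { apply (ultra_compl HU). intro HV.
          destruct (filter_ex HU HV) as [y [h1 [h2 h3]]].
          apply h2. refine (filter_mono HU _ HV). intros z [_ [_ h]]; exact h. }
        refine (filter_mono HU _ (filter_and HU Hi IH)).
        intros y [h1 h2] j [<-|Hj]; auto. }
    destruct (filter_ex HU (Hall l)) as [y Hy].
    destruct (Hl y) as [i [h1 h2]]. exact (Hy i h1 h2).
Qed.

End Metric.

Lemma ultra_lim_compact {X : Type} (d : X -> X -> R) :
  (forall U, is_ultra U -> exists x, filter_lim d U x) -> is_compact d.
Proof.
  intros HU I V Vo Vc. apply NNPP; intro Hn.
  set (F0 := fun A : X -> Prop =>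
               exists l : list I, forall x, (forall i, In i l -> ~ V i x) -> A x).
  assert (HF : is_filter F0).
  { split.
    - exists nil. auto.
    - intros A B [l1 h1] [l2 h2]. exists (l1 ++ l2). intros x Hx. split.
      + apply h1. intros i Hi. apply Hx. apply in_or_app; auto.
      + apply h2. intros i Hi. apply Hx. apply in_or_app; auto.
    - intros A B HAB [l h]. exists l. auto.
    - intros [l h]. apply Hn. exists l. intros x. apply NNPP; intro Hx.
      apply (h x). intros i Hi HVi. apply Hx. exists i; auto. }
  destruct (ultra_extend F0 HF) as [W [HW HW0]].
  destruct (HU W HW) as [x Hx].
  destruct (Vc x) as [i Hi]. destruct (Vo i x Hi) as [e [he k]].
  assert (h1 : W (fun y => d x y < e)) by (apply Hx; auto).
  assert (h2 : W (fun y => ~ V i y)).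
  { apply HW0. exists (i :: nil). intros y Hy. apply Hy. left; auto. }
  destruct (filter_and_ex HW h1 h2) as [y [k1 k2]]. apply k2; auto.
Qed.

Section System.
Context {X : Type} {d : X -> X -> R} {T Ti : X -> X} (Hs : is_system d T Ti).

Lemma system_metric : is_metric d.
Proof. exact (proj1 Hs). Qed.
Lemma system_compact : is_compact d.
Proof. exact (proj1 (proj2 Hs)). Qed.
Lemma system_TTi x : T (Ti x) = x.
Proof. exact (proj1 (proj2 (proj2 Hs)) x). Qed.
Lemma system_TiT x : Ti (T x) = x.
Proof. exact (proj1 (proj2 (proj2 (proj2 Hs))) x). Qed.
Lemma system_cont : continuous d T.
Proof. exact (proj1 (proj2 (proj2 (proj2 (proj2 Hs))))). Qed.
Lemma system_cont_inv : continuous d Ti.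
Proof. exact (proj2 (proj2 (proj2 (proj2 (proj2 Hs))))). Qed.

End System.

Section Zpow.
Context {X : Type} (T Ti : X -> X) (HTTi : forall x, T (Ti x) = x) (HTiT : forall x, Ti (T x) = x).

Lemma zpow_succ n x : zpow T Ti (Z.succ n) x = T (zpow T Ti n x).
Proof.
  destruct n as [|p|p].
  - reflexivity.
  - rewrite <- Pos2Z.inj_succ. unfold zpow. rewrite Pos2Nat.inj_succ. reflexivity.
  - destruct (Pos.succ_pred_or p) as [->|E].
    + simpl. rewrite HTTi. reflexivity.
    + rewrite <- E. replace (Z.succ (Zneg (Pos.succ (Pos.pred p)))) with (Zneg (Pos.pred p)) by lia.
      unfold zpow. rewrite Pos2Nat.inj_succ. simpl. rewrite HTTi. reflexivity.
Qed.

Lemma zpow_pred n x : zpow T Ti (Z.pred n) x = Ti (zpow T Ti n x).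
Proof. rewrite <- (Z.succ_pred n) at 2. rewrite zpow_succ, HTiT. reflexivity. Qed.

Lemma zpow_add n m x : zpow T Ti (n + m) x = zpow T Ti n (zpow T Ti m x).
Proof.
  revert x. induction n using Z.peano_ind; intro x.
  - reflexivity.
  - rewrite Z.add_succ_l, !zpow_succ, IHn. reflexivity.
  - rewrite Z.add_pred_l, !zpow_pred, IHn. reflexivity.
Qed.

Lemma zpow_invariant (Y : X -> Prop) :
  (forall x, Y x <-> Y (T x)) -> forall n x, Y x -> Y (zpow T Ti n x).
Proof.
  intros HY n. induction n using Z.peano_ind; intros x Hx.
  - exact Hx.
  - rewrite zpow_succ. apply (proj1 (HY _)), IHn, Hx.
  - rewrite zpow_pred. apply (proj2 (HY _)). rewrite HTTi. apply IHn, Hx.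
Qed.

Lemma zpow_continuous (d : X -> X -> R) :
  continuous d T -> continuous d Ti -> forall n, continuous d (zpow T Ti n).
Proof.
  intros HT HTi n. induction n using Z.peano_ind; intros x eps He.
  - exists eps. split; auto.
  - destruct (HT (zpow T Ti n x) eps He) as [e1 [h1 k1]].
    destruct (IHn x e1 h1) as [e2 [h2 k2]]. exists e2. split; [exact h2|].
    intros y Hy. rewrite !zpow_succ. auto.
  - destruct (HTi (zpow T Ti n x) eps He) as [e1 [h1 k1]].
    destruct (IHn x e1 h1) as [e2 [h2 k2]]. exists e2. split; [exact h2|].
    intros y Hy. rewrite !zpow_pred. auto.
Qed.

End Zpow.

Lemma iter_conj {A B : Type} (h : A -> B) f g :
  (forall a, h (f a) = g (h a)) -> forall n a, h (Defs.iter n f a) = Defs.iter n g (h a).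
Proof. intros H n; induction n; intro a; simpl; auto. rewrite H, IHn; auto. Qed.

Lemma zpow_conj {A B : Type} (h : A -> B) f fi g gi :
  (forall a, h (f a) = g (h a)) -> (forall a, h (fi a) = gi (h a)) ->
  forall n a, h (zpow f fi n a) = zpow g gi n (h a).
Proof. intros H Hi n a. destruct n; simpl; auto; apply iter_conj; auto. Qed.

Section Distal.
Context {X : Type} {d : X -> X -> R} {T Ti : X -> X} (Hs : is_system d T Ti).

Let Hm : is_metric d := system_metric Hs.

Lemma filter_lim_uadd w p q yq z : is_filter p -> is_filter q ->
  filter_lim d (filter_map (fun n => zpow T Ti n w) q) yq ->
  filter_lim d (filter_map (fun n => zpow T Ti n yq) p) z ->
  filter_lim d (filter_map (fun n => zpow T Ti n w) (uadd p q)) z.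
Proof.
  intros Hp Hq Hyq Hz eps He. unfold filter_map, uadd.
  refine (filter_mono Hp _ (Hz (eps/2) ltac:(lra))). intros n Hn. simpl in Hn.
  destruct (zpow_continuous T Ti (system_TTi Hs) (system_TiT Hs) d
              (system_cont Hs) (system_cont_inv Hs) n yq (eps/2) ltac:(lra)) as [del [hd kd]].
  refine (filter_mono Hq _ (Hyq del hd)). intros m Hmm. simpl in Hmm.
  rewrite (zpow_add T Ti (system_TTi Hs) (system_TiT Hs)).
  pose proof (metric_tri Hm z (zpow T Ti n yq) (zpow T Ti n (zpow T Ti m w))).
  pose proof (kd _ Hmm). lra.
Qed.

Definition lim_in (w : X) (Y : X -> Prop) (p : ultraZ) : Prop :=
  is_ultra p /\ exists y, filter_lim d (filter_map (fun n => zpow T Ti n w) p) y /\ Y y.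

Lemma lim_in_usemigroup w Y y : is_closed d Y -> (forall x, Y x <-> Y (T x)) -> Y y ->
  (forall eps, 0 < eps -> exists n, d (zpow T Ti n w) y < eps) -> usemigroup (lim_in w Y).
Proof.
  intros HYc HY Yy Hwy. split.
  - intros p Hp Hn.
    destruct (compact_ultra_lim Hm (system_compact Hs) _
                (ultra_map (fun n => zpow T Ti n w) p Hp)) as [y' Hy'].
    assert (nY : ~ Y y') by (intro h; apply Hn; split; eauto).
    destruct (HYc y' nY) as [e [he k]].
    exists (fun n => d y' (zpow T Ti n w) < e/2). split; [apply (Hy' (e/2)); lra|].
    intros q Hq [_ [y'' [Hy'' Yy'']]] hq.
    destruct (filter_and_ex Hq hq (Hy'' (e/2) ltac:(lra))) as [n [k1 k2]].
    apply (k y''); [|exact Yy''].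
    pose proof (metric_tri Hm y' (zpow T Ti n w) y''). rewrite (metric_sym Hm (zpow T Ti n w) y'') in H. lra.
  - destruct (approx_ultra_lim Hm (fun n => zpow T Ti n w) y Hwy) as [p [Hp Hpy]].
    exists p. split; [exact Hp|]. exists y; auto.
  - intros q [Hq _]; exact Hq.
  - intros p q [Hp [yp [Hyp Yp]]] [Hq [yq [Hyq Yq]]]. split; [apply uadd_ultra; auto|].
    destruct (compact_ultra_lim Hm (system_compact Hs) _
                (ultra_map (fun n => zpow T Ti n yq) p Hp)) as [z Hz].
    exists z. split.
    + exact (filter_lim_uadd w p q yq z Hp Hq Hyq Hz).
    + apply (closed_filter_lim Y _ z HYc (ultra_map _ p Hp) Hz).
      refine (filter_mono Hp _ (filter_true Hp)). intros n _.
      exact (zpow_invariant T Ti (system_TTi Hs) (system_TiT Hs) Y HY n yq Yq).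
Qed.

Lemma distal_lim_eq w w' y p : is_distal d T Ti -> is_filter p ->
  filter_lim d (filter_map (fun n => zpow T Ti n w) p) y ->
  filter_lim d (filter_map (fun n => zpow T Ti n w') p) y -> w = w'.
Proof.
  intros HD Hp Hw Hw'. apply NNPP; intro Hne.
  destruct (HD w w' Hne) as [c [hc kc]].
  destruct (filter_and_ex Hp (Hw (c/2) ltac:(lra)) (Hw' (c/2) ltac:(lra))) as [n [k1 k2]].
  pose proof (kc n). pose proof (metric_tri Hm (zpow T Ti n w) y (zpow T Ti n w')).
  rewrite (metric_sym Hm _ y) in H0. lra.
Qed.

(* For an idempotent p in [lim_in w Y] with limit y0, the p-limit of T^n y0 is the
   (p + p)-limit of T^n w, i.e. y0 again: w and y0 are proximal, hence equal. *)
Lemma distal_closed_invariant_mem Y w y : is_distal d T Ti ->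
  is_closed d Y -> (forall x, Y x <-> Y (T x)) -> Y y ->
  (forall eps, 0 < eps -> exists n, d (zpow T Ti n w) y < eps) -> Y w.
Proof.
  intros HD HYc HY Yy Hwy.
  destruct (ellis_numakura _ (lim_in_usemigroup w Y y HYc HY Yy Hwy))
    as [p [[Hp [y0 [Hy0 Y0]]] Hpp]].
  destruct (compact_ultra_lim Hm (system_compact Hs) _
              (ultra_map (fun n => zpow T Ti n y0) p Hp)) as [z Hz].
  assert (Hz0 := filter_lim_uadd w p p y0 z Hp Hp Hy0 Hz). rewrite Hpp in Hz0.
  rewrite <- (filter_lim_unique Hm _ _ _ (ultra_map _ p Hp) Hy0 Hz0) in Hz.
  rewrite (distal_lim_eq w y0 y0 p HD Hp Hy0 Hz). exact Y0.
Qed.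

End Distal.

Section Subsystem.
Context {X : Type} (d : X -> X -> R) (T Ti : X -> X) (Y : X -> Prop)
  (HT : forall x, Y x -> Y (T x)) (HTi : forall x, Y x -> Y (Ti x)).

Definition sub_dist (a b : {x | Y x}) : R := d (proj1_sig a) (proj1_sig b).
Definition sub_map (a : {x | Y x}) : {x | Y x} := exist _ (T (proj1_sig a)) (HT _ (proj2_sig a)).
Definition sub_map_inv (a : {x | Y x}) : {x | Y x} :=
  exist _ (Ti (proj1_sig a)) (HTi _ (proj2_sig a)).

Lemma sub_eq (a b : {x | Y x}) : proj1_sig a = proj1_sig b -> a = b.
Proof. exact (eq_sig_hprop (fun x => proof_irrelevance (Y x)) a b). Qed.

Lemma zpow_sub n a : proj1_sig (zpow sub_map sub_map_inv n a) = zpow T Ti n (proj1_sig a).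
Proof. apply (zpow_conj (@proj1_sig _ _)); reflexivity. Qed.

Lemma iter_sub n a : proj1_sig (Defs.iter n sub_map a) = Defs.iter n T (proj1_sig a).
Proof. apply (iter_conj (@proj1_sig _ _)); reflexivity. Qed.

Lemma sub_system : is_system d T Ti -> is_closed d Y -> is_system sub_dist sub_map sub_map_inv.
Proof.
  intros Hs HYc. pose proof (system_metric Hs) as Hm.
  split; [|split; [|split; [|split; [|split]]]].
  - unfold sub_dist. split; [|split; [|split]].
    + intros; apply (metric_ge0 Hm).
    + intros a b. split.
      * intro E. apply sub_eq, (metric_eq0 Hm), E.
      * intros ->. apply (metric_refl Hm).
    + intros; apply (metric_sym Hm).
    + intros; apply (metric_tri Hm).
  - apply ultra_lim_compact. intros U HU.
    destruct (compact_ultra_lim Hm (system_compact Hs) _ (ultra_map (@proj1_sig _ _) U HU))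
      as [z Hz].
    assert (Yz : Y z).
    { apply (closed_filter_lim Y _ z HYc (ultra_map _ U HU) Hz).
      refine (filter_mono HU _ (filter_true HU)). intros a _; exact (proj2_sig a). }
    exists (exist _ z Yz). exact Hz.
  - intros a. apply sub_eq, (system_TTi Hs).
  - intros a. apply sub_eq, (system_TiT Hs).
  - intros a e He. destruct (system_cont Hs (proj1_sig a) e He) as [del [h k]].
    exists del. split; [exact h|]. intros b Hb; exact (k _ Hb).
  - intros a e He. destruct (system_cont_inv Hs (proj1_sig a) e He) as [del [h k]].
    exists del. split; [exact h|]. intros b Hb; exact (k _ Hb).
Qed.

Lemma sub_distal : is_distal d T Ti -> is_distal sub_dist sub_map sub_map_inv.
Proof.
  intros HD a b Hne.
  assert (Hne' : proj1_sig a <> proj1_sig b) by (intro E; apply Hne, sub_eq, E).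
  destruct (HD _ _ Hne') as [c [hc kc]]. exists c. split; [exact hc|].
  intros n. unfold sub_dist. rewrite !zpow_sub. apply kc.
Qed.

End Subsystem.

Definition orbit_closure {X : Type} (d : X -> X -> R) (T Ti : X -> X) (x0 z : X) : Prop :=
  forall eps, 0 < eps -> exists n, d (zpow T Ti n x0) z < eps.

Section OrbitClosure.
Context {X : Type} {d : X -> X -> R} {T Ti : X -> X} (Hs : is_system d T Ti) (x0 : X).

Let Hm : is_metric d := system_metric Hs.

Lemma orbit_closure_refl : orbit_closure d T Ti x0 x0.
Proof. intros e He. exists 0%Z. simpl. rewrite (metric_refl Hm). exact He. Qed.

Lemma orbit_closure_closed : is_closed d (orbit_closure d T Ti x0).
Proof.
  intros z Hz. apply not_all_ex_not in Hz as [e He]. apply imply_to_and in He as [He nz].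
  exists (e/2). split; [lra|]. intros y Hy Oy.
  destruct (Oy (e/2) ltac:(lra)) as [n Hn]. apply nz. exists n.
  pose proof (metric_tri Hm (zpow T Ti n x0) y z). rewrite (metric_sym Hm y z) in H. lra.
Qed.

Lemma orbit_closure_map (g : X -> X) : continuous d g ->
  (forall n, exists m, g (zpow T Ti n x0) = zpow T Ti m x0) ->
  forall z, orbit_closure d T Ti x0 z -> orbit_closure d T Ti x0 (g z).
Proof.
  intros gc gz z Hz e He. destruct (gc z e He) as [del [hd kd]].
  destruct (Hz del hd) as [n Hn]. destruct (gz n) as [m Em]. exists m. rewrite <- Em.
  rewrite (metric_sym Hm). apply kd. rewrite (metric_sym Hm). exact Hn.
Qed.

Lemma orbit_closure_T z : orbit_closure d T Ti x0 z -> orbit_closure d T Ti x0 (T z).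
Proof.
  apply orbit_closure_map; [exact (system_cont Hs)|]. intros n. exists (Z.succ n).
  rewrite (zpow_succ T Ti (system_TTi Hs)). reflexivity.
Qed.

Lemma orbit_closure_Ti z : orbit_closure d T Ti x0 z -> orbit_closure d T Ti x0 (Ti z).
Proof.
  apply orbit_closure_map; [exact (system_cont_inv Hs)|]. intros n. exists (Z.pred n).
  rewrite (zpow_pred T Ti (system_TTi Hs) (system_TiT Hs)). reflexivity.
Qed.

(* A closed invariant set of the orbit closure containing some point contains x0 by
   distality, hence the whole orbit of x0, hence everything. *)
Lemma orbit_closure_minimal : is_distal d T Ti ->
  is_minimal (sub_dist d (orbit_closure d T Ti x0)) (sub_map T _ orbit_closure_T).
Proof.
  intros HD Y HYc [y Yy] HY.
  set (Y0 := orbit_closure d T Ti x0).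
  set (w0 := exist Y0 x0 orbit_closure_refl).
  pose proof (sub_system d T Ti Y0 orbit_closure_T orbit_closure_Ti Hs orbit_closure_closed) as Hsub.
  assert (Yw0 : Y w0).
  { apply (distal_closed_invariant_mem Hsub Y w0 y); auto.
    - exact (sub_distal d T Ti Y0 orbit_closure_T orbit_closure_Ti HD).
    - intros e He. destruct (proj2_sig y e He) as [n Hn]. exists n.
      unfold sub_dist. rewrite zpow_sub. exact Hn. }
  intros w. apply NNPP; intro Hn. destruct (HYc w Hn) as [e [he k]].
  destruct (proj2_sig w e he) as [n Hnn].
  apply (k (zpow (sub_map T Y0 orbit_closure_T) (sub_map_inv Ti Y0 orbit_closure_Ti) n w0)).
  - unfold sub_dist. rewrite zpow_sub, (metric_sym Hm). exact Hnn.
  - apply (zpow_invariant _ _ (system_TTi Hsub) (system_TiT Hsub) Y HY n w0 Yw0).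
Qed.

End OrbitClosure.

(* The orbit closure of x is a minimal distal system, to which the hypothesis applies. *)
Lemma recurrence_distal (Rs : nat -> Prop) : pw_recurrence_minimal_distal Rs ->
  forall (X : Type) (d : X -> X -> R) (T Ti : X -> X),
    is_system d T Ti -> is_distal d T Ti ->
    forall x eps, 0 < eps -> exists n, Rs n /\ d (Defs.iter n T x) x < eps.
Proof.
  intros HR X d T Ti Hs HD x eps Heps.
  set (Y := orbit_closure d T Ti x).
  destruct (HR _ _ _ _ (sub_system d T Ti Y (orbit_closure_T Hs x) (orbit_closure_Ti Hs x) Hs
                          (orbit_closure_closed Hs x))
               (orbit_closure_minimal Hs x HD)
               (sub_distal d T Ti Y (orbit_closure_T Hs x) (orbit_closure_Ti Hs x) HD)
               (exist Y x (orbit_closure_refl Hs x)) eps Heps) as [n [Hn Hd]].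
  exists n. split; [exact Hn|]. unfold sub_dist in Hd. rewrite iter_sub in Hd. exact Hd.
Qed.

Definition prod_dist {X1 X2 : Type} (d1 : X1 -> X1 -> R) (d2 : X2 -> X2 -> R)
  (z z' : X1 * X2) : R := Rmax (d1 (fst z) (fst z')) (d2 (snd z) (snd z')).

Definition prod_map {X1 X2 : Type} (f1 : X1 -> X1) (f2 : X2 -> X2) (z : X1 * X2) : X1 * X2 :=
  (f1 (fst z), f2 (snd z)).

Lemma iter_prod {X1 X2 : Type} (f1 : X1 -> X1) (f2 : X2 -> X2) n z :
  Defs.iter n (prod_map f1 f2) z = (Defs.iter n f1 (fst z), Defs.iter n f2 (snd z)).
Proof. induction n as [|n IH]; simpl; [destruct z; reflexivity|rewrite IH; reflexivity]. Qed.

Lemma zpow_prod {X1 X2 : Type} (T1 Ti1 : X1 -> X1) (T2 Ti2 : X2 -> X2) n z :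
  zpow (prod_map T1 T2) (prod_map Ti1 Ti2) n z = (zpow T1 Ti1 n (fst z), zpow T2 Ti2 n (snd z)).
Proof.
  rewrite (surjective_pairing (zpow _ _ n z)).
  rewrite (zpow_conj fst _ _ T1 Ti1), (zpow_conj snd _ _ T2 Ti2); reflexivity.
Qed.

Section Product.
Context {X1 X2 : Type} {d1 : X1 -> X1 -> R} {d2 : X2 -> X2 -> R}.

Lemma prod_metric : is_metric d1 -> is_metric d2 -> is_metric (prod_dist d1 d2).
Proof.
  intros Hm1 Hm2. unfold prod_dist. split; [|split; [|split]].
  - intros x y. pose proof (metric_ge0 Hm1 (fst x) (fst y)).
    pose proof (Rmax_l (d1 (fst x) (fst y)) (d2 (snd x) (snd y))). lra.
  - intros [a b] [a' b']; simpl. split.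
    + intro E. pose proof (metric_ge0 Hm1 a a'). pose proof (metric_ge0 Hm2 b b').
      pose proof (Rmax_l (d1 a a') (d2 b b')). pose proof (Rmax_r (d1 a a') (d2 b b')).
      f_equal; [apply (metric_eq0 Hm1)|apply (metric_eq0 Hm2)]; lra.
    + intro E. inversion E. rewrite (metric_refl Hm1), (metric_refl Hm2). apply Rmax_left. lra.
  - intros. rewrite (metric_sym Hm1), (metric_sym Hm2). reflexivity.
  - intros x y z. pose proof (metric_tri Hm1 (fst x) (fst y) (fst z)).
    pose proof (metric_tri Hm2 (snd x) (snd y) (snd z)).
    pose proof (Rmax_l (d1 (fst x) (fst y)) (d2 (snd x) (snd y))).
    pose proof (Rmax_r (d1 (fst x) (fst y)) (d2 (snd x) (snd y))).
    pose proof (Rmax_l (d1 (fst y) (fst z)) (d2 (snd y) (snd z))).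
    pose proof (Rmax_r (d1 (fst y) (fst z)) (d2 (snd y) (snd z))).
    apply Rmax_lub; lra.
Qed.

Lemma prod_compact : is_metric d1 -> is_metric d2 -> is_compact d1 -> is_compact d2 ->
  is_compact (prod_dist d1 d2).
Proof.
  intros Hm1 Hm2 Hc1 Hc2. apply ultra_lim_compact. intros U HU.
  destruct (compact_ultra_lim Hm1 Hc1 _ (ultra_map fst U HU)) as [a Ha].
  destruct (compact_ultra_lim Hm2 Hc2 _ (ultra_map snd U HU)) as [b Hb].
  exists (a, b). intros e He.
  refine (filter_mono HU _ (filter_and HU (Ha e He) (Hb e He))).
  intros z [h1 h2]. apply Rmax_lub_lt; auto.
Qed.

Lemma prod_continuous f1 f2 : continuous d1 f1 -> continuous d2 f2 ->
  continuous (prod_dist d1 d2) (prod_map f1 f2).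
Proof.
  intros h1 h2 z e He. destruct (h1 (fst z) e He) as [a [ha ka]].
  destruct (h2 (snd z) e He) as [b [hb kb]].
  exists (Rmin a b). split; [apply Rmin_glb_lt; auto|].
  intros y Hy. apply Rmax_Rlt in Hy as [Hy1 Hy2].
  pose proof (Rmin_l a b). pose proof (Rmin_r a b).
  apply Rmax_lub_lt; [apply ka|apply kb]; lra.
Qed.

Context {T1 Ti1 : X1 -> X1} {T2 Ti2 : X2 -> X2}.

Lemma prod_system : is_system d1 T1 Ti1 -> is_system d2 T2 Ti2 ->
  is_system (prod_dist d1 d2) (prod_map T1 T2) (prod_map Ti1 Ti2).
Proof.
  intros Hs1 Hs2.
  pose proof (system_metric Hs1) as Hm1. pose proof (system_metric Hs2) as Hm2.
  split; [exact (prod_metric Hm1 Hm2)|].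
  split; [exact (prod_compact Hm1 Hm2 (system_compact Hs1) (system_compact Hs2))|].
  split; [|split; [|split]].
  - intros [a b]. unfold prod_map; simpl. rewrite (system_TTi Hs1), (system_TTi Hs2). reflexivity.
  - intros [a b]. unfold prod_map; simpl. rewrite (system_TiT Hs1), (system_TiT Hs2). reflexivity.
  - exact (prod_continuous _ _ (system_cont Hs1) (system_cont Hs2)).
  - exact (prod_continuous _ _ (system_cont_inv Hs1) (system_cont_inv Hs2)).
Qed.

Lemma prod_distal : is_distal d1 T1 Ti1 -> is_distal d2 T2 Ti2 ->
  is_distal (prod_dist d1 d2) (prod_map T1 T2) (prod_map Ti1 Ti2).
Proof.
  intros HD1 HD2 [a b] [a' b'] Hne. unfold prod_dist.
  destruct (classic (a = a')) as [<-|Ea].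
  - assert (Eb : b <> b') by (intro E; apply Hne; rewrite E; reflexivity).
    destruct (HD2 b b' Eb) as [c [hc kc]]. exists c. split; [exact hc|]. intros n.
    rewrite !zpow_prod. eapply Rle_trans; [apply kc|apply Rmax_r].
  - destruct (HD1 a a' Ea) as [c [hc kc]]. exists c. split; [exact hc|]. intros n.
    rewrite !zpow_prod. eapply Rle_trans; [apply kc|apply Rmax_l].
Qed.

End Product.

Theorem mainTheorem16 (A B : nat -> Prop)
  (hA : forall n, A n -> (1 <= n)%nat)
  (hB : forall n, B n -> (1 <= n)%nat)
  (hAB : pw_recurrence_minimal_distal (fun n => A n \/ B n)) :
  pw_recurrence_minimal_distal A \/ pw_recurrence_minimal_distal B.
Proof.
  destruct (classic (pw_recurrence_minimal_distal A)) as [HA|nA]; [left; exact HA|right].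
  intros X2 d2 T2 Ti2 Hs2 _ HD2 x2 e2 He2. apply NNPP; intro nB.
  apply nA. intros X1 d1 T1 Ti1 Hs1 _ HD1 x1 e1 He1. apply NNPP; intro nA1.
  destruct (recurrence_distal _ hAB _ _ _ _ (prod_system Hs1 Hs2) (prod_distal HD1 HD2)
              (x1, x2) (Rmin e1 e2) (Rmin_glb_lt _ _ _ He1 He2)) as [n [Hn Hd]].
  unfold prod_dist in Hd. rewrite iter_prod in Hd. apply Rmax_Rlt in Hd as [H1 H2].
  simpl in H1, H2. pose proof (Rmin_l e1 e2). pose proof (Rmin_r e1 e2).
  destruct Hn as [Hn|Hn]; [apply nA1|apply nB]; exists n; split; auto; lra.
Qed.
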